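(* For every $\delta>0$ and every finite set $A=\{a_1,\dots,a_m\}\subset\mathbb{R}^n$ there is $p_0(A,\delta)$ such that for every prime $p\ge p_0(A,\delta)$ there exist $N\ge n$ and a Euclidean sub-$p$-toral set $S=\{s_1,\dots,s_m\}\subset\mathbb{R}^N$ with $|a_i-s_i|<\delta$ for all $i$, where $\mathbb{R}^n\subset\mathbb{R}^N$ via the standard inclusion.
   Context: A $p$-torus is a group isomorphic to $(\mathbb{Z}_p)^\alpha$ for some $\alpha\ge1$. A set $X\subset\mathbb{R}^k$ is Euclidean sub-$p$-toral if there exist $n\ge k$, a $p$-torus $G$ and an action of $G$ on $\mathbb{R}^n$ by isometries such that $X$ (viewed in $\mathbb{R}^n$ via the standard inclusion $\mathbb{R}^k\subset\mathbb{R}^n$) is contained in a single $G$-orbit. *)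

From HB Require Import structures.
From mathcomp Require Import all_boot all_order all_algebra.
From mathcomp Require Import reals.
Set Implicit Arguments. Unset Strict Implicit. Unset Printing Implicit Defensive.
Import Order.TTheory GRing.Theory Num.Theory.
Local Open Scope ring_scope.

Definition edist (R : realType) (n : nat) (x y : 'rV[R]_n) : R :=
  Num.sqrt (\sum_(i < n) (x 0 i - y 0 i) ^+ 2).

Definition std_incl (R : realType) (n k : nat) (x : 'rV[R]_n) : 'rV[R]_(n + k) :=
  row_mx x 0.

Definition isometric_ptorus_action (R : realType) (p alpha n : nat)
    (act : 'rV['Z_p]_alpha -> 'rV[R]_n -> 'rV[R]_n) : Prop :=
  [/\ (forall x, act 0 x = x),
      (forall g h x, act (g + h) x = act g (act h x)) &
      (forall g x y, edist (act g x) (act g y) = edist x y)].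

Definition sub_p_toral (R : realType) (p k : nat) (X : 'rV[R]_k -> Prop) : Prop :=
  exists (k' alpha : nat) (act : 'rV['Z_p]_alpha -> 'rV[R]_(k + k') -> 'rV[R]_(k + k')),
    (0 < alpha)%N /\ isometric_ptorus_action act /\
    exists x0 : 'rV[R]_(k + k'),
      forall x, X x -> exists g, act g x0 = std_incl k' x.

From HB Require Import structures.
From mathcomp Require Import all_boot all_order all_algebra archimedean.
From mathcomp Require Import reals.
From mathcomp Require Import topology normedtype derive realfun trigo.
From mathcomp Require Import ring lra.
Import Order.TTheory GRing.Theory Num.Theory Num.Def.
Import numFieldNormedType.Exports.
Set Implicit Arguments. Unset Strict Implicit. Unset Printing Implicit Defensive.
Local Open Scope ring_scope.

(* Embed R^n in R^(n+n) and let the j-th factor of the torus (Z_p)^n rotate the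
   plane of the coordinates j and n + j by multiples of 2 pi / p about the point
   at distance r below R^n. The orbit of the origin consists of the points with
   coordinates (r sin t_j, r cos t_j - r). Over [-M, M] a circle of large radius r
   is almost flat: the angle t with r sin t = a has r (1 - cos t) <= a^2 / r, and
   once p is large compared to r some angle 2 pi k / p is within eps / r of t.
   Hence all the points a_i lie close to a single orbit. *)

Section Trigonometry.
Variable R : realType.

Lemma ler_dist_derive (f df : R -> R) :
  (forall x : R, is_derive x (1 : R) f (df x)) -> (forall x, `|df x| <= 1) ->
  forall x y, `|f x - f y| <= `|x - y|.
Proof.
move=> f_df df_le1.
have f_cont : continuous f.
  move=> x; apply: differentiable_continuous.
  exact: (proj1 (derivable1_diffP f x) (@ex_derive _ _ _ _ _ _ _ (f_df x))).
have le_dist a b : a <= b -> `|f b - f a| <= `|b - a|.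
  move=> ab; have [c _ ->] := MVT_segment ab (fun x _ => f_df x)
    (continuous_subspaceT f_cont).
  by rewrite normrM -[X in _ <= X]mul1r ler_wpM2r.
move=> x y; have [xy|/ltW yx] := leP x y; last exact: le_dist.
by rewrite distrC [`|x - y|]distrC; apply: le_dist.
Qed.

Lemma ler_dist_sin (x y : R) : `|sin x - sin y| <= `|x - y|.
Proof. by apply: (@ler_dist_derive sin cos) => // z; apply: cos_max. Qed.

Lemma ler_dist_cos (x y : R) : `|cos x - cos y| <= `|x - y|.
Proof.
by apply: (@ler_dist_derive cos (fun z => - sin z)) => // z; rewrite normrN sin_max.
Qed.

Lemma sqrtr_ge_id (y : R) : 0 <= y <= 1 -> y <= Num.sqrt y.
Proof.
move=> /andP[y0 y1]; have y2_le : y ^+ 2 <= y by rewrite expr2 ler_piMl.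
by rewrite -{1}(ger0_norm y0) -sqrtr_sqr ler_sqrt // sqr_ge0.
Qed.

(* The angle is [asin x], moved into [[0, 2 pi[]; its cosine is [sqrt (1 - x^2)]. *)
Lemma sin_onto_period (x : R) : -1 <= x <= 1 ->
  exists t, [/\ 0 <= t < pi *+ 2, sin t = x & 1 - x ^+ 2 <= cos t].
Proof.
move=> x_itv; have pi2 := pi_ge2 R.
have asin_itv : - (pi / 2) <= asin x <= pi / 2.
  by rewrite asin_geNpi2 ?asin_lepi2.
have cos_ge : 1 - x ^+ 2 <= cos (asin x).
  rewrite cos_asin // sqrtr_ge_id // subr_ge0 lerBlDr lerDl sqr_ge0 andbT.
  by case/andP: x_itv => ? ?; nra.
have sin_asin : sin (asin x) = x by rewrite asinK // inE.
have [asin_ge0|asin_lt0] := leP 0 (asin x).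
  by exists (asin x); split => //; apply/andP; split => //; lra.
exists (asin x + pi *+ 2); rewrite sinD2pi cosD2pi; split => //.
by apply/andP; split; lra.
Qed.

End Trigonometry.

Section GridAngles.
Variable R : realType.

Definition grid_angle (P g : nat) : R := pi *+ 2 * g%:R / P%:R.

Lemma grid_angle_modn (P g : nat) : (0 < P)%N ->
  grid_angle P g = grid_angle P (g %% P) + pi *+ 2 *+ (g %/ P).
Proof.
move=> P_gt0; have P_neq0 : (P%:R : R) != 0 by rewrite pnatr_eq0 -lt0n.
rewrite /grid_angle {1}(divn_eq g P) natrD natrM -mulr_natr; by field.
Qed.

Lemma cos_grid_angle_modn (P g : nat) : (0 < P)%N ->
  cos (grid_angle P (g %% P)) = cos (grid_angle P g).
Proof. by move=> P_gt0; rewrite (grid_angle_modn g P_gt0) (periodicn (@cosD2pi R)). Qed.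

Lemma sin_grid_angle_modn (P g : nat) : (0 < P)%N ->
  sin (grid_angle P (g %% P)) = sin (grid_angle P g).
Proof. by move=> P_gt0; rewrite (grid_angle_modn g P_gt0) (periodicn (@sinD2pi R)). Qed.

Lemma grid_angleD (P g h : nat) : grid_angle P (g + h) = grid_angle P g + grid_angle P h.
Proof. by rewrite /grid_angle natrD mulrDr mulrDl. Qed.

Lemma grid_angle_near (P : nat) (t : R) : (0 < P)%N -> 0 <= t < pi *+ 2 ->
  exists2 g, (g < P)%N & 0 <= t - grid_angle P g <= pi *+ 2 / P%:R.
Proof.
move=> P_gt0 /andP[t_ge0 t_lt]; have P_pos : (0 : R) < P%:R by rewrite ltr0n.
have pi2_pos : (0 : R) < pi *+ 2 by rewrite pmulrn_rgt0 // pi_gt0.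
pose y := t * P%:R / (pi *+ 2).
have y_ge0 : 0 <= y by rewrite divr_ge0 ?mulr_ge0 // ltW.
have /andP[g_le g_gt] := truncn_itv y_ge0.
exists (Num.truncn y).
  by rewrite truncn_lt_nat // ltr_pdivrMr // mulrC ltr_pM2l.
have g_le_t : grid_angle P (Num.truncn y) <= t.
  by move: g_le; rewrite /grid_angle /y ler_pdivlMr // ler_pdivrMr // mulrC.
have t_lt_g1 : t * P%:R < ((Num.truncn y)%:R + 1) * (pi *+ 2).
  by move: g_gt; rewrite /y ltr_pdivrMr // -natr1.
rewrite subr_ge0 g_le_t lerBlDr -(ler_pM2r P_pos) mulrDl /grid_angle !divfK ?gt_eqF //.
by move: t_lt_g1; rewrite mulrDl mul1r; lra.
Qed.

Lemma grid_angle_circle_approx (P : nat) (r eps a : R) :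
  (0 < P)%N -> 0 < r -> `|a| <= r -> a ^+ 2 <= r * eps / 2 ->
  pi *+ 2 * r / P%:R <= eps / 2 ->
  exists2 g, (g < P)%N &
    `|a - r * sin (grid_angle P g)| <= eps /\ `|r * cos (grid_angle P g) - r| <= eps.
Proof.
move=> P_gt0 r_gt0 a_le_r a2_le grid_le.
have r_neq0 : r != 0 by rewrite gt_eqF.
have eps_ge0 : 0 <= eps.
  by rewrite -(pmulr_rge0 _ r_gt0); have := sqr_ge0 a; lra.
pose x := a / r.
have x_itv : -1 <= x <= 1.
  by rewrite -ler_norml normrM normfV (gtr0_norm r_gt0) ler_pdivrMr // mul1r.
have [t [t_itv sin_t cos_t_ge]] := sin_onto_period x_itv.
have [g g_lt /andP[tg_ge0 tg_le]] := grid_angle_near P_gt0 t_itv.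
set th := grid_angle P g in tg_ge0 tg_le *.
exists g => //.
have r_dist : r * `|t - th| <= eps / 2.
  apply: le_trans grid_le; rewrite ger0_norm //.
  have -> : pi *+ 2 * r / P%:R = r * (pi *+ 2 / P%:R) by ring.
  by rewrite ler_pM2l.
have a_eq : a = r * sin t by rewrite sin_t /x mulrC divfK.
have rx2 : r * x ^+ 2 <= eps / 2.
  have -> : r * x ^+ 2 = a ^+ 2 / r by rewrite /x; field.
  by rewrite ler_pdivrMr //; lra.
split.
  rewrite a_eq -mulrBr normrM (gtr0_norm r_gt0).
  apply: le_trans (_ : r * `|t - th| <= _); last by lra.
  by rewrite ler_pM2l // ler_dist_sin.
have cos_dist : r * `|cos t - cos th| <= eps / 2.
  by apply: le_trans r_dist; rewrite ler_pM2l // ler_dist_cos.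
rewrite -[X in _ - X]mulr1 -mulrBr normrM (gtr0_norm r_gt0) ler0_norm ?subr_le0 ?cos_le1 //.
rewrite opprB; have dist_le := ler_norm (cos t - cos th).
have : r * (1 - cos th) <= r * (x ^+ 2 + `|cos t - cos th|).
  by rewrite ler_pM2l //; lra.
by rewrite mulrDr; lra.
Qed.

End GridAngles.

Section ZpAngles.
Variables (R : realType) (p : nat).

(* [(Zp_trunc p).+2] is the modulus of ['Z_p], that is [p] when [1 < p]. *)
Definition zp_angle (z : 'Z_p) : R := grid_angle R (Zp_trunc p).+2 z.

Lemma zp_angle0 : zp_angle 0 = 0.
Proof. by rewrite /zp_angle /grid_angle mulr0 mul0r. Qed.

Lemma cos_zp_angleD (x y : 'Z_p) : cos (zp_angle (x + y)) = cos (zp_angle x + zp_angle y).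
Proof. by rewrite /zp_angle -grid_angleD /= cos_grid_angle_modn. Qed.

Lemma sin_zp_angleD (x y : 'Z_p) : sin (zp_angle (x + y)) = sin (zp_angle x + zp_angle y).
Proof. by rewrite /zp_angle -grid_angleD /= sin_grid_angle_modn. Qed.

End ZpAngles.

Lemma rotation_sqr_dist (F : comRingType) (c s u v u' v' r : F) : c ^+ 2 + s ^+ 2 = 1 ->
  (c * u + s * (v + r) - (c * u' + s * (v' + r))) ^+ 2 +
  (c * (v + r) - s * u - r - (c * (v' + r) - s * u' - r)) ^+ 2 =
  (u - u') ^+ 2 + (v - v') ^+ 2.
Proof.
move=> cs1; transitivity ((c ^+ 2 + s ^+ 2) * ((u - u') ^+ 2 + (v - v') ^+ 2)).
  by ring.
by rewrite cs1 mul1r.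
Qed.

Section TorusRotation.
Variables (R : realType) (p n : nat) (r : R).

(* The j-th coordinate of [g] rotates the plane spanned by the coordinates [j] and
   [n + j] about the point [(0, -r)], so the orbit of the origin lies on circles of
   radius [r] tangent to [R^n]. *)
Definition torus_rot (g : 'rV['Z_p]_n) (x : 'rV[R]_(n + n)) : 'rV[R]_(n + n) :=
  let th j := zp_angle R (g 0 j) in
  row_mx
    (\row_j (cos (th j) * lsubmx x 0 j + sin (th j) * (rsubmx x 0 j + r)))
    (\row_j (cos (th j) * (rsubmx x 0 j + r) - sin (th j) * lsubmx x 0 j - r)).

Lemma torus_rot0 x : torus_rot 0 x = x.
Proof.
rewrite -[RHS]hsubmxK; congr row_mx; apply/rowP => j;
  by rewrite !mxE zp_angle0 cos0 sin0; ring.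
Qed.

Lemma torus_rotD g h x : torus_rot (g + h) x = torus_rot g (torus_rot h x).
Proof.
rewrite /torus_rot row_mxKl row_mxKr; congr row_mx; apply/rowP => j;
  by rewrite !mxE cos_zp_angleD sin_zp_angleD cosD sinD; ring.
Qed.

Lemma edist_torus_rot g x y : edist (torus_rot g x) (torus_rot g y) = edist x y.
Proof.
rewrite /edist !big_split_ord /= -!big_split /=; congr Num.sqrt; apply: eq_bigr => j _.
by rewrite !row_mxEl !row_mxEr !mxE rotation_sqr_dist // cos2Dsin2.
Qed.

Lemma isometric_torus_rot : isometric_ptorus_action torus_rot.
Proof. by split; [exact: torus_rot0 | exact: torus_rotD | exact: edist_torus_rot]. Qed.

Lemma torus_rot_origin g : torus_rot g 0 =
  row_mx (\row_j (r * sin (zp_angle R (g 0 j))))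
         (\row_j (r * cos (zp_angle R (g 0 j)) - r)).
Proof. by congr row_mx; apply/rowP => j; rewrite !mxE; ring. Qed.

End TorusRotation.

Section EuclideanDistance.
Variable R : realType.

Lemma edist_row_mx k1 k2 (x1 y1 : 'rV[R]_k1) (x2 y2 : 'rV[R]_k2) :
  edist (row_mx x1 x2) (row_mx y1 y2) = Num.sqrt (edist x1 y1 ^+ 2 + edist x2 y2 ^+ 2).
Proof.
rewrite /edist !sqr_sqrtr ?sumr_ge0 // => [|i _|i _]; rewrite ?sqr_ge0 //.
rewrite big_split_ord /=; congr (Num.sqrt (_ + _)); apply: eq_bigr => i _;
  by rewrite ?row_mxEl ?row_mxEr.
Qed.

Lemma edist_le_coord k (x y : 'rV[R]_k) (eps : R) :
  (forall j, `|x 0 j - y 0 j| <= eps) -> edist x y <= Num.sqrt (eps ^+ 2 *+ k).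
Proof.
move=> xy_le; rewrite /edist ler_sqrt; last by rewrite mulrn_wge0 // sqr_ge0.
rewrite -[X in _ *+ X](card_ord k) -sumr_const; apply: ler_sum => j _.
rewrite -real_normK ?num_real // lerXn2r ?nnegrE //; exact: le_trans (xy_le j).
Qed.

End EuclideanDistance.

(* Orbits of an isometric torus action are sub-p-toral: pad the space by no
   coordinates and the torus by one coordinate acting trivially, as the
   definition requires a torus of positive rank. *)
Lemma sub_p_toral_orbit (R : realType) (p alpha k : nat)
    (act : 'rV['Z_p]_alpha -> 'rV[R]_k -> 'rV[R]_k) (x0 : 'rV[R]_k)
    (X : 'rV[R]_k -> Prop) :
  isometric_ptorus_action act -> (forall x, X x -> exists g, act g x0 = x) ->
  sub_p_toral p X.
Proof.
move=> [act0 actD act_iso] X_orbit.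
pose act' (g : 'rV['Z_p]_(alpha + 1)) (x : 'rV[R]_(k + 0)) :=
  row_mx (act (lsubmx g) (lsubmx x)) (rsubmx x).
exists 0%N, (alpha + 1)%N, act'; split; first by rewrite addn1.
split; first split.
- by move=> x; rewrite /act' linear0 act0 hsubmxK.
- by move=> g h x; rewrite /act' linearD actD row_mxKl row_mxKr.
- move=> g x y; rewrite /act' !edist_row_mx act_iso.
  by rewrite -[in RHS](hsubmxK x) -[in RHS](hsubmxK y) edist_row_mx.
exists (row_mx x0 0) => x /X_orbit[g act_g].
by exists (row_mx g 0); rewrite /act' !row_mxKl row_mxKr act_g.
Qed.

(* The radius [r] makes the circle flat enough over [[-M, M]]; [p0] makes the
   grid of angles [2 pi k / p] fine enough at that radius. *)
Lemma zp_circle_approx (R : realType) (M eps : R) : 0 <= M -> 0 < eps ->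
  exists (r : R) (p0 : nat), forall p, prime p -> (p0 <= p)%N ->
    forall a, `|a| <= M -> exists z : 'Z_p,
      `|a - r * sin (zp_angle R z)| <= eps /\ `|r * cos (zp_angle R z) - r| <= eps.
Proof.
move=> M_ge0 eps_gt0; pose r := M + 1 + M ^+ 2 * 2 / eps.
have flat_ge0 : 0 <= M ^+ 2 * 2 / eps.
  by rewrite divr_ge0 ?mulr_ge0 ?sqr_ge0 // ltW.
have r_gt0 : 0 < r by rewrite /r; lra.
have M_le_r : M <= r by rewrite /r; lra.
have M2_le : M ^+ 2 <= r * eps / 2.
  have -> : M ^+ 2 = M ^+ 2 * 2 / eps * eps / 2 by field; rewrite gt_eqF.
  by rewrite ler_pM2r ?invr_gt0 // ler_pM2r // /r; lra.
exists r, (Num.truncn (pi *+ 2 * r / (eps / 2))).+1 => p p_prime p0_le a a_le.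
have P_eq : (Zp_trunc p).+2 = p := Zp_cast (prime_gt1 p_prime).
have grid_le : pi *+ 2 * r / ((Zp_trunc p).+2)%:R <= eps / 2.
  have p_gt : pi *+ 2 * r / (eps / 2) < p%:R.
    by apply: lt_le_trans (truncnS_gt _) _; rewrite ler_nat.
  rewrite P_eq ler_pdivrMr ?ltr0n ?prime_gt0 //.
  by move: p_gt; rewrite ltr_pdivrMr ?divr_gt0 //; lra.
have a2_le : a ^+ 2 <= r * eps / 2.
  apply: le_trans M2_le; rewrite -real_normK ?num_real // lerXn2r ?nnegrE //.
have [g g_lt approx] :=
  grid_angle_circle_approx (ltn0Sn _) r_gt0 (le_trans a_le M_le_r) a2_le grid_le.
by exists (Ordinal g_lt).
Qed.

Theorem theorem5 (R : realType) (n : nat) (delta : R) (hdelta : 0 < delta)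
    (m : nat) (a : 'I_m -> 'rV[R]_n) :
  exists p0 : nat, forall p : nat, prime p -> (p0 <= p)%N ->
    exists (k : nat) (s : 'I_m -> 'rV[R]_(n + k)),
      sub_p_toral p (fun y => exists i, y = s i) /\
      (forall i, edist (std_incl k (a i)) (s i) < delta).
Proof.
pose eps := delta / (n + n).+1%:R.
have eps_gt0 : 0 < eps by rewrite divr_gt0 ?ltr0n.
pose M := \sum_i \sum_j `|a i 0 j|.
have M_ge0 : 0 <= M by do 2![apply: sumr_ge0 => ? _].
have a_le_M i j : `|a i 0 j| <= M.
  rewrite /M (bigD1 i) // (bigD1 j) //= -addrA lerDl.
  by rewrite addr_ge0 // sumr_ge0 // => *; apply: sumr_ge0.
have [r [p0 approx]] := zp_circle_approx M_ge0 eps_gt0.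
exists p0 => p p_prime p0_le.
have /fin_all_exists[G G_approx] : forall ij : 'I_m * 'I_n, exists z : 'Z_p,
    `|a ij.1 0 ij.2 - r * sin (zp_angle R z)| <= eps /\
    `|r * cos (zp_angle R z) - r| <= eps.
  by move=> ij; apply: approx; rewrite ?a_le_M.
pose g i : 'rV['Z_p]_n := \row_j G (i, j).
exists n, (fun i => torus_rot r (g i) 0); split.
  by apply: sub_p_toral_orbit (isometric_torus_rot p n r) _ => _ [i ->]; exists (g i).
move=> i; apply: le_lt_trans (edist_le_coord (eps := eps) _) _.
  move=> j; rewrite /std_incl torus_rot_origin.
  have [j' ->|j' ->] := split_ordP j; rewrite ?row_mxEl ?row_mxEr !mxE;
    have [? ?] := G_approx (i, j') => //.
  by rewrite sub0r normrN.
rewrite -(ger0_norm (ltW hdelta)) -sqrtr_sqr ltr_sqrt ?exprn_gt0 // /eps.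
rewrite expr_div_n -mulr_natr mulrAC ltr_pdivrMr ?exprn_gt0 ?ltr0n //.
rewrite ltr_pM2l ?exprn_gt0 // -natr1.
have : (0 : R) <= (n + n)%:R by rewrite ler0n.
set N := (n + n)%:R; nra.
Qed.
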